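(* If $(A,W)$ is a Pratt comonoid, then $W$ is closed under forming unions of pairwise disjoint families (of arbitrary cardinality) of its members.
   Context: A Pratt comonoid is a pair $(A,W)$ where $A$ is a set and $W$ is a set of subsets of $A$ such that (i) $\emptyset\in W$ and $A\in W$; (ii) whenever $C\subseteq A\times A$ is such that for every $a\in A$ both the $a$-th row $\{b\mid (a,b)\in C\}$ and the $a$-th column $\{b\mid (b,a)\in C\}$ belong to $W$ (a crossword over $W$), the diagonal $\{b\mid (b,b)\in C\}$ also belongs to $W$. *)

Definition subset_of (A : Type) := A -> Prop.

Definition crossword {A : Type} (W : subset_of A -> Prop) (C : A -> A -> Prop) : Prop :=
  forall a : A, W (fun b => C a b) /\ W (fun b => C b a).

Definition diagonal {A : Type} (C : A -> A -> Prop) : subset_of A := fun b => C b b.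

Definition empty_set {A : Type} : subset_of A := fun _ => False.
Definition full_set {A : Type} : subset_of A := fun _ => True.

Definition pratt_comonoid (A : Type) (W : subset_of A -> Prop) : Prop :=
  W empty_set /\ W full_set /\
  (forall C : A -> A -> Prop, crossword W C -> W (diagonal C)).

Definition big_union {A I : Type} (F : I -> subset_of A) : subset_of A :=
  fun a => exists i : I, F i a.

Definition pairwise_disjoint {A I : Type} (F : I -> subset_of A) : Prop :=
  forall i j : I, i <> j -> forall a : A, F i a -> F j a -> False.

(* The disjoint union of the family F is the diagonal of the relation
   "a and b lie in a common member of F".  By disjointness, the row (and, by
   symmetry, the column) of a is the unique member containing a, or the empty
   set when a lies in no member; so this relation is a crossword over W. *)

From Stdlib Require Import Classical FunctionalExtensionality PropExtensionality.

Lemma subset_ext {A : Type} (P Q : subset_of A) :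
  (forall a, P a <-> Q a) -> P = Q.
Proof.
  intro HPQ; apply functional_extensionality; intro a.
  apply propositional_extensionality; exact (HPQ a).
Qed.

Section SameBlock.

Variables (A I : Type) (F : I -> subset_of A).

Definition same_block (a b : A) : Prop := exists i, F i a /\ F i b.

Lemma same_block_sym (a b : A) : same_block a b -> same_block b a.
Proof. intros [i [Ha Hb]]; exists i; split; assumption. Qed.

Lemma same_block_row_member (i : I) (a : A) :
  pairwise_disjoint F -> F i a -> same_block a = F i.
Proof.
  intros Hdisj Hia; apply subset_ext; intro b; split.
  - intros [j [Hja Hjb]].
    destruct (classic (j = i)) as [-> | Hji]; [exact Hjb |].
    destruct (Hdisj j i Hji a Hja Hia).
  - intro Hib; exists i; split; assumption.
Qed.

Lemma same_block_row_outside (a : A) :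
  ~ big_union F a -> same_block a = empty_set.
Proof.
  intro Hout; apply subset_ext; intro b; split.
  - intros [i [Hia _]]; apply Hout; exists i; exact Hia.
  - intros [].
Qed.

Lemma same_block_row_in (W : subset_of A -> Prop) (a : A) :
  W empty_set -> (forall i, W (F i)) -> pairwise_disjoint F ->
  W (same_block a).
Proof.
  intros W0 WF Hdisj.
  destruct (classic (big_union F a)) as [[i Hia] | Hout].
  - rewrite (same_block_row_member i a Hdisj Hia); apply WF.
  - rewrite (same_block_row_outside a Hout); exact W0.
Qed.

Lemma same_block_crossword (W : subset_of A -> Prop) :
  W empty_set -> (forall i, W (F i)) -> pairwise_disjoint F ->
  crossword W same_block.
Proof.
  intros W0 WF Hdisj a; split.
  - exact (same_block_row_in W a W0 WF Hdisj).
  - replace (fun b => same_block b a) with (same_block a).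
    + exact (same_block_row_in W a W0 WF Hdisj).
    + apply subset_ext; intro b; split; apply same_block_sym.
Qed.

Lemma diagonal_same_block : diagonal same_block = big_union F.
Proof.
  apply subset_ext; intro a; split.
  - intros [i [Hia _]]; exists i; exact Hia.
  - intros [i Hia]; exists i; split; assumption.
Qed.

End SameBlock.

Theorem corollary4p2 (A : Type) (W : subset_of A -> Prop) :
  pratt_comonoid A W ->
  forall (I : Type) (F : I -> subset_of A),
    (forall i : I, W (F i)) ->
    pairwise_disjoint F ->
    W (big_union F).
Proof.
  intros [W0 [_ Wdiag]] I F WF Hdisj.
  rewrite <- diagonal_same_block.
  apply Wdiag, same_block_crossword; assumption.
Qed.
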